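(* Let $k\geq 2$ and let $T_0,T_1,\dots,T_{k-1}$ be subtrees of a rooted arc-weighted tree $T$, with $T_k:=T_0$, such that $T_i$ does not overshadow $T_{i+1}$ for every $i=0,\dots,k-1$. Then the collection $\{T_1,\dots,T_k\}$ is not compatible, i.e., there are two trees in it neither of which overshadows the other.
   Context: $T$ is a rooted tree whose arcs carry positive integer weights; the depth of a node is the sum of arc weights on its path to the root. A subtree is a connected node set of $T$. For subtrees $T_1,T_2$, $T_1$ overshadows $T_2$ if every node of $T_2\setminus T_1$ has depth strictly greater than every node of $T_2\cap T_1$. Two subtrees are compatible if one overshadows the other; a collection is compatible if every two of its members are compatible. *)

From mathcomp Require Import all_boot.
Set Implicit Arguments. Unset Strict Implicit. Unset Printing Implicit Defensive.

(* A rooted arc-weighted tree on the finite node type V: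
   root r, parent map par (arc v -> par v for v <> r), arc weight w v of
   the arc from v to its parent. *)
Definition rooted_weighted_tree (V : finType) (r : V) (par : V -> V)
    (w : V -> nat) : Prop :=
  [/\ par r = r,
      (forall v : V, exists n, iter n par v = r) &
      (forall v : V, v != r -> 0 < w v)].

(* depth of v = sum of the arc weights on the path from v to the root;
   the path has fewer than #|V| arcs, and iter i par v stays at r after
   reaching it. *)
Definition depth (V : finType) (r : V) (par : V -> V) (w : V -> nat) (v : V)
  : nat :=
  \sum_(i < #|V|) (if iter i par v != r then w (iter i par v) else 0).

Definition tree_adj (V : finType) (r : V) (par : V -> V) : rel V :=
  fun x y => ((x != r) && (par x == y)) || ((y != r) && (par y == x)).

Definition subtree (V : finType) (r : V) (par : V -> V) (S : {set V}) : Prop :=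
  S != set0 /\
  forall x y, x \in S -> y \in S ->
    connect [rel a b | [&& a \in S, b \in S & tree_adj r par a b]] x y.

Definition overshadows (V : finType) (r : V) (par : V -> V) (w : V -> nat)
    (T1 T2 : {set V}) : Prop :=
  forall x y, x \in T2 :\: T1 -> y \in T2 :&: T1 ->
    depth r par w y < depth r par w x.

Definition compatible (V : finType) (r : V) (par : V -> V) (w : V -> nat)
    (T1 T2 : {set V}) : Prop :=
  overshadows r par w T1 T2 \/ overshadows r par w T2 T1.

Definition compatible_collection (V : finType) (r : V) (par : V -> V)
    (w : V -> nat) (I : Type) (T : I -> {set V}) : Prop :=
  forall i j, compatible r par w (T i) (T j).

From mathcomp Require Import all_boot.
From Stdlib Require Import Classical.
Set Implicit Arguments. Unset Strict Implicit. Unset Printing Implicit Defensive.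

(* Compare subtrees by their depth profiles t |-> #{v in S | depth v <= t},
   ordered lexicographically.  If B overshadows A but not conversely, the
   profiles agree or grow from A to B up to the depth of a shared node y,
   and strictly differ at the depth of a node x of B \ A that is not deeper
   than y; so profile A < profile B.  In a compatible collection where T_i
   never overshadows T_(i+1), each T_(i+1) must overshadow T_i, so the
   profiles strictly increase around the cycle, which is absurd. *)

Definition lex_lt (f g : nat -> nat) : Prop :=
  exists t, (forall s, s < t -> f s = g s) /\ f t < g t.

Lemma lex_lt_trans f g h : lex_lt f g -> lex_lt g h -> lex_lt f h.
Proof.
move=> [t1 [eq1 lt1]] [t2 [eq2 lt2]].
case: (ltngtP t1 t2) => [t12|t21|t1_eq]; last subst t2.
- exists t1; split; last by rewrite -(eq2 _ t12).
  by move=> s st1; rewrite eq1 // eq2 // (ltn_trans st1 t12).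
- exists t2; split; last by rewrite (eq1 _ t21).
  by move=> s st2; rewrite eq1 ?(ltn_trans st2 t21) // eq2.
- exists t1; split; last exact: ltn_trans lt1 lt2.
  by move=> s st1; rewrite eq1 // eq2.
Qed.

Lemma lex_ltxx f : ~ lex_lt f f.
Proof. by case=> t [_]; rewrite ltnn. Qed.

Lemma lex_lt_le_prefix f g t0 t1 :
  (forall t, t <= t0 -> f t <= g t) -> t1 <= t0 -> f t1 != g t1 -> lex_lt f g.
Proof.
move=> le_fg t10 neq1; have ex_neq : exists t, f t != g t by exists t1.
case: (ex_minnP ex_neq) => t neq_t min_t; exists t; split.
  by move=> s st; apply/eqP/negP => /negP /min_t; rewrite leqNgt st.
by rewrite ltn_neqAle neq_t le_fg // (leq_trans (min_t _ neq1) t10).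
Qed.

Section OrdSCycle.

Variable k : nat.

Lemma iter_ordS n (i : 'I_k) : val (iter n (@ordS k) i) = (i + n) %% k.
Proof.
elim: n => [|n IHn] /=; first by rewrite addn0 modn_small.
by rewrite IHn addnS -addn1 modnDml addn1.
Qed.

Lemma no_ordS_cycle (X : Type) (R : X -> X -> Prop) (f : 'I_k -> X) :
  (forall x y z, R x y -> R y z -> R x z) -> (forall x, ~ R x x) -> 0 < k ->
  ~ (forall i, R (f i) (f (ordS i))).
Proof.
move=> R_trans R_irr k_gt0 R_step; pose i0 := Ordinal k_gt0.
have R_iter n : R (f i0) (f (iter n.+1 (@ordS k) i0)).
  elim: n => [|n IHn]; first exact: R_step.
  by apply: R_trans IHn _; apply: R_step.
have iter_k : iter k (@ordS k) i0 = i0.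
  by apply: val_inj; rewrite iter_ordS /= add0n modnn.
by apply: (R_irr (f i0)); have := R_iter k.-1; rewrite prednK // iter_k.
Qed.

End OrdSCycle.

Section DepthProfile.

Variables (V : finType) (d : V -> nat).

Definition overshadows_wrt (A B : {set V}) : Prop :=
  forall x y, x \in B :\: A -> y \in B :&: A -> d y < d x.

Definition depth_profile (S : {set V}) (t : nat) : nat :=
  #|[set v in S | d v <= t]|.

Lemma not_overshadows_wrt A B :
  ~ overshadows_wrt A B ->
  exists x y, [/\ x \in B :\: A, y \in B :&: A & d x <= d y].
Proof.
move=> not_AB; apply: NNPP => no_witness; apply: not_AB => x y xBA yBA.
by rewrite ltnNge; apply/negP => dxy; apply: no_witness; exists x, y.
Qed.

Lemma depth_profile_lt A B :
  overshadows_wrt B A -> ~ overshadows_wrt A B ->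
  lex_lt (depth_profile A) (depth_profile B).
Proof.
move=> BA /not_overshadows_wrt [x [y [/setDP [xB xA] /setIP [yB yA] dxy]]].
have sub_AB t : t <= d y -> [set v in A | d v <= t] \subset [set v in B | d v <= t].
  move=> t_dy; apply/subsetP => v; rewrite !inE => /andP [vA vt].
  rewrite vt andbT; apply/negPn/negP => vB.
  have := BA v y; rewrite !inE vA vB yA yB => /(_ erefl erefl).
  by rewrite ltnNge (leq_trans vt t_dy).
apply: (lex_lt_le_prefix (t0 := d y) (t1 := d x)) => // [t t_dy|].
  exact/subset_leq_card/sub_AB.
rewrite neq_ltn; apply/orP; left; apply: proper_card.
rewrite properE sub_AB //=.
by apply/subsetPn; exists x; rewrite !inE ?xB ?(negbTE xA) leqnn.
Qed.

End DepthProfile.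

Theorem lemma3 (V : finType) (r : V) (par : V -> V) (w : V -> nat)
  (k : nat) (T : 'I_k -> {set V}) :
  rooted_weighted_tree r par w ->
  2 <= k ->
  (forall i, subtree r par (T i)) ->
  (forall i : 'I_k, ~ overshadows r par w (T i) (T (ordS i))) ->
  ~ compatible_collection r par w T.
Proof.
move=> _ k_ge2 _ not_shadow compat.
pose profile i := depth_profile (depth r par w) (T i).
apply: (no_ordS_cycle (R := lex_lt) (f := profile) lex_lt_trans lex_ltxx).
  exact: ltnW k_ge2.
move=> i; apply: depth_profile_lt (not_shadow i).
by case: (compat i (ordS i)) => // /not_shadow.
Qed.
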